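(* Let $\mathcal{X}$ be a countable set and $\mathcal{D}$ a distribution on $\mathcal{X}\times\{0,1\}$. Fix any two models $f_1,f_2:\mathcal{X}\to[0,1]$ and any $\epsilon>0$. If $\mu(U_\epsilon(f_1,f_2))=\alpha$, then for some $\bullet\in\{>,<\}$ and some $i\in\{1,2\}$, $$\mu(U^\bullet_\epsilon(f_1,f_2))\cdot\big(v_*^\bullet-v_i^\bullet\big)^2\ge\frac{\alpha\epsilon^2}{8},$$ where $v_*^\bullet=\mathbb{E}_{(x,y)\sim\mathcal{D}}[y\mid x\in U^\bullet_\epsilon(f_1,f_2)]$ and $v_i^\bullet=\mathbb{E}_{(x,y)\sim\mathcal{D}}[f_i(x)\mid x\in U^\bullet_\epsilon(f_1,f_2)]$.
   Context: For a set $S\subseteq\mathcal{X}$, $\mu(S)=\Pr_{(x,y)\sim\mathcal{D}}[x\in S]$. $U_\epsilon(f_1,f_2)=\{x:|f_1(x)-f_2(x)|>\epsilon\}$, $U^>_\epsilon(f_1,f_2)=\{x\in U_\epsilon(f_1,f_2):f_1(x)>f_2(x)\}$, $U^<_\epsilon(f_1,f_2)=\{x\in U_\epsilon(f_1,f_2):f_1(x)<f_2(x)\}$. When a set has mass zero the product $\mu(\cdot)\cdot(\cdot)^2$ is taken to be $0$. *)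

From HB Require Import structures.
From mathcomp Require Import all_boot all_order all_algebra.
From mathcomp Require Import all_classical all_reals all_analysis.
Set Implicit Arguments. Unset Strict Implicit. Unset Printing Implicit Defensive.
Import Order.TTheory GRing.Theory Num.Theory.
Local Open Scope classical_set_scope.
Local Open Scope ring_scope.

(* A distribution D on X * {0,1} over a countable X is given by its
   probability mass function pmf : X * bool -> R (label y = true means 1). *)
Definition is_distribution (R : realType) (X : countType) (pmf : X * bool -> R) : Prop :=
  (forall z, 0 <= pmf z) /\ (\esum_(z in [set: X * bool]) (pmf z)%:E = 1%E).

Definition mu (R : realType) (X : countType) (pmf : X * bool -> R) (S : set X) : R :=
  fine (\esum_(z in [set z : X * bool | S z.1]) (pmf z)%:E).

(* E_{(x,y)~D}[ g(x,y) | x \in S ]  (for nonnegative bounded g) *)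
Definition condE (R : realType) (X : countType) (pmf : X * bool -> R) (S : set X)
  (g : X * bool -> R) : R :=
  fine (\esum_(z in [set z : X * bool | S z.1]) (g z * pmf z)%:E) / mu pmf S.

Definition Ueps (R : realType) (X : Type) (eps : R) (f1 f2 : X -> R) : set X :=
  [set x | eps < `|f1 x - f2 x|].
Definition Ugt (R : realType) (X : Type) (eps : R) (f1 f2 : X -> R) : set X :=
  [set x | Ueps eps f1 f2 x /\ f1 x > f2 x].
Definition Ult (R : realType) (X : Type) (eps : R) (f1 f2 : X -> R) : set X :=
  [set x | Ueps eps f1 f2 x /\ f1 x < f2 x].

Definition gap_term (R : realType) (X : countType) (pmf : X * bool -> R) (S : set X)
  (f : X -> R) : R :=
  if mu pmf S == 0 then 0
  else mu pmf S * (condE pmf S (fun z => (z.2)%:R) - condE pmf S (fun z => f z.1)) ^+ 2.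

From HB Require Import structures.
From mathcomp Require Import all_boot all_order all_algebra.
From mathcomp Require Import all_classical all_reals all_analysis.
From mathcomp Require Import ring lra.
Import Order.TTheory GRing.Theory Num.Theory.
Local Open Scope classical_set_scope.
Local Open Scope ring_scope.

(* Since eps > 0, U_eps is the disjoint union of U^> and U^<, so one of them,
   call it S, has mass m >= alpha/2.  On S one model exceeds the other by more
   than eps pointwise, hence their conditional means differ by at least eps, and
   the conditional mean of y lies at distance >= eps/2 from one of them.  That
   model's gap term is then >= m (eps/2)^2 >= alpha eps^2 / 8. *)

Lemma ge0_esumZl (R : realType) (T : choiceType) (S : set T) (a : T -> \bar R) (r : R) :
  0 <= r -> (forall i, (0 <= a i)%E) ->
  (\esum_(i in S) (r%:E * a i) = r%:E * \esum_(i in S) a i)%E.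
Proof.
move=> r_ge0 a_ge0; rewrite /esum -ereal_supZl //; last first.
  by apply/set0P; exists 0%E; exists set0; [exact: fsets_set0|rewrite fsbig_set0].
congr ereal_sup; rewrite image_comp; apply: eq_imagel => A _ /=.
by rewrite ge0_mule_fsumr.
Qed.

Lemma far_from_endpoint {R : realFieldType} (a b1 b2 d : R) :
  b2 + d <= b1 -> exists2 b, b = b1 \/ b = b2 & d / 2 <= `|a - b|.
Proof.
move=> b12; have [mid_le_a|a_lt_mid] := lerP ((b1 + b2) / 2) a.
- by exists b2; [right|apply: le_trans (ler_norm _); lra].
- by exists b1; [left|rewrite distrC; apply: le_trans (ler_norm _); lra].
Qed.

Definition restrE {R : realType} {X : countType} (pmf : X * bool -> R) (S : set X)
    (g : X * bool -> R) : R :=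
  fine (\esum_(z in [set z : X * bool | S z.1]) (g z * pmf z)%:E).

Lemma condEE (R : realType) (X : countType) (pmf : X * bool -> R) S g :
  condE pmf S g = restrE pmf S g / mu pmf S.
Proof. by []. Qed.

Section Distribution.
Local Set Implicit Arguments.
Local Unset Strict Implicit.
Context {R : realType} {X : countType} {pmf : X * bool -> R}.
Hypothesis pmf_distr : is_distribution pmf.

Lemma pmf_ge0 z : 0 <= pmf z.
Proof. by case: pmf_distr. Qed.

Lemma fin_num_esum_le_pmf (A : set (X * bool)) (a : X * bool -> R) :
  (forall z, 0 <= a z <= pmf z) -> \esum_(z in A) (a z)%:E \is a fin_num.
Proof.
move=> a_bnd; have a_ge0 z : 0 <= a z by case/andP: (a_bnd z).
rewrite ge0_fin_numE; last by apply: esum_ge0 => z _; rewrite lee_fin.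
apply: (@le_lt_trans _ _ (\esum_(z in [set: X * bool]) (pmf z)%:E)); last first.
  by case: pmf_distr => _ ->; rewrite ltry.
rewrite esum_mkcond; apply: le_esum => z _.
by case: ifP => _; rewrite lee_fin ?pmf_ge0 //; case/andP: (a_bnd z).
Qed.

Lemma EFin_mu S : (mu pmf S)%:E = \esum_(z in [set z : X * bool | S z.1]) (pmf z)%:E.
Proof.
by rewrite /mu fineK // fin_num_esum_le_pmf // => z; rewrite lexx pmf_ge0.
Qed.

Lemma mu_ge0 S : 0 <= mu pmf S.
Proof. by rewrite -lee_fin EFin_mu; apply: esum_ge0 => z _; rewrite lee_fin pmf_ge0. Qed.

Lemma mu_setU A B : A `&` B = set0 -> mu pmf (A `|` B) = mu pmf A + mu pmf B.
Proof.
move=> AB0; apply: EFin_inj; rewrite EFinD !EFin_mu.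
rewrite (esumID [set z : X * bool | A z.1]); last by move=> z _; rewrite lee_fin pmf_ge0.
congr (_ + _)%E; congr esum; apply/seteqP; split=> z /=.
- by case.
- by move=> Az; split=> //; left.
- by case=> -[Az|Bz] // /(_ Az).
- move=> Bz; split; [by right|move=> Az].
  by have : (A `&` B) z.1 by []; rewrite AB0.
Qed.

Lemma EFin_restrE S g : (forall z, 0 <= g z <= 1) ->
  (restrE pmf S g)%:E = \esum_(z in [set z : X * bool | S z.1]) (g z * pmf z)%:E.
Proof.
move=> g_bnd; rewrite /restrE fineK // fin_num_esum_le_pmf // => z.
by case/andP: (g_bnd z) => g0 g1; rewrite mulr_ge0 ?pmf_ge0 //= ler_piMl ?pmf_ge0.
Qed.

Lemma restrE_shift S (g h : X * bool -> R) (c : R) : 0 <= c ->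
  (forall z, 0 <= g z <= 1) -> (forall z, 0 <= h z <= 1) ->
  (forall z, S z.1 -> g z + c <= h z) ->
  restrE pmf S g + c * mu pmf S <= restrE pmf S h.
Proof.
move=> c_ge0 g_bnd h_bnd gch.
rewrite -lee_fin EFinD EFinM !EFin_restrE // EFin_mu.
rewrite -ge0_esumZl // => [|z]; last by rewrite lee_fin pmf_ge0.
rewrite -esumD => [|z _|z _]; first last.
- by rewrite lee_fin mulr_ge0 ?pmf_ge0.
- by case/andP: (g_bnd z) => g0 _; rewrite lee_fin mulr_ge0 ?pmf_ge0.
apply: le_esum => z Sz; rewrite -EFinM -EFinD lee_fin -mulrDl.
by rewrite ler_wpM2r ?pmf_ge0 ?gch.
Qed.

Lemma gap_term_ge S (f : X -> R) (d : R) : 0 <= d ->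
  d * mu pmf S / 2 <= `|restrE pmf S (fun z => (z.2)%:R) - restrE pmf S (fun z => f z.1)| ->
  mu pmf S * d ^+ 2 / 4 <= gap_term pmf S f.
Proof.
rewrite /gap_term !condEE; set m := mu pmf S; set A := restrE _ _ _; set B := restrE _ _ _.
move=> d_ge0 far; have [->|m_neq0] := eqVneq m 0; first by rewrite !mul0r.
have m_gt0 : 0 < m by rewrite lt_neqAle eq_sym m_neq0 mu_ge0.
have -> : m * (A / m - B / m) ^+ 2 = (A - B) ^+ 2 / m by field.
rewrite ler_pdivlMr // -(real_normK (num_real (A - B))).
have -> : m * d ^+ 2 / 4 * m = (d * m / 2) ^+ 2 by field.
by rewrite lerXn2r ?nnegrE ?normr_ge0 ?divr_ge0 ?mulr_ge0 ?(ltW m_gt0).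
Qed.

Lemma gap_term_ge_shift S (f g : X -> R) (eps : R) : 0 <= eps ->
  (forall x, 0 <= f x <= 1) -> (forall x, 0 <= g x <= 1) ->
  (forall x, S x -> g x + eps <= f x) ->
  exists2 h, h = f \/ h = g & mu pmf S * eps ^+ 2 / 4 <= gap_term pmf S h.
Proof.
move=> eps_ge0 f_bnd g_bnd gf.
have := restrE_shift eps_ge0 (fun z => g_bnd z.1) (fun z => f_bnd z.1)
  (fun z => gf z.1).
move=> /(far_from_endpoint (restrE pmf S (fun z => (z.2)%:R))) [b fg far].
case: fg far => -> far; [exists f; first by left|exists g; first by right].
all: by apply: gap_term_ge; rewrite // mulrC.
Qed.

End Distribution.

Section DisagreementRegions.
Context {R : realType} {X : Type} (eps : R) (f1 f2 : X -> R).

Lemma Ueps_setU : 0 <= eps -> Ueps eps f1 f2 = Ugt eps f1 f2 `|` Ult eps f1 f2.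
Proof.
move=> eps_ge0; apply/seteqP; split=> x; last by case=> -[].
rewrite /Ueps /= => far; case: (ltgtP (f1 x) (f2 x)) => [lt|gt|eq]; [right|left|];
  rewrite // eq subrr normr0 in far; lra.
Qed.

Lemma Ugt_Ult_disjoint : Ugt eps f1 f2 `&` Ult eps f1 f2 = set0.
Proof. by apply/seteqP; split=> x // [[_ gt] [_ lt]]; lra. Qed.

Lemma Ugt_shift x : Ugt eps f1 f2 x -> f2 x + eps <= f1 x.
Proof. by case=> + gt; rewrite /Ueps /= gtr0_norm ?subr_gt0 //; lra. Qed.

Lemma Ult_shift x : Ult eps f1 f2 x -> f1 x + eps <= f2 x.
Proof. by case=> + lt; rewrite /Ueps /= ltr0_norm ?subr_lt0 //; lra. Qed.

End DisagreementRegions.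

Theorem lemma2 (R : realType) (X : countType) (pmf : X * bool -> R)
  (hD : is_distribution pmf) (f1 f2 : X -> R)
  (hf1 : forall x, 0 <= f1 x <= 1) (hf2 : forall x, 0 <= f2 x <= 1)
  (eps alpha : R) (heps : 0 < eps)
  (halpha : mu pmf (Ueps eps f1 f2) = alpha) :
  exists S : set X, (S = Ugt eps f1 f2 \/ S = Ult eps f1 f2) /\
  exists f : X -> R, (f = f1 \/ f = f2) /\
    gap_term pmf S f >= alpha * eps ^+ 2 / 8.
Proof.
have alpha_split : alpha = mu pmf (Ugt eps f1 f2) + mu pmf (Ult eps f1 f2).
  by rewrite -halpha Ueps_setU ?ltW // mu_setU // Ugt_Ult_disjoint.
have gap_ge S f g : (forall x, 0 <= f x <= 1) -> (forall x, 0 <= g x <= 1) ->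
    (forall x, S x -> g x + eps <= f x) -> alpha <= 2 * mu pmf S ->
    exists f' : X -> R, (f' = f \/ f' = g) /\ alpha * eps ^+ 2 / 8 <= gap_term pmf S f'.
  move=> f_bnd g_bnd gf heavy.
  have [h fg gap] := gap_term_ge_shift hD (ltW heps) f_bnd g_bnd gf.
  exists h; split=> //; apply: le_trans gap.
  rewrite (_ : alpha * _ / 8 = alpha / 2 * eps ^+ 2 / 4); last by field.
  by rewrite ler_wpM2r ?invr_ge0 ?ler0n // ler_wpM2r ?sqr_ge0 //; lra.
have [lt_le_gt|gt_lt_lt] := lerP (mu pmf (Ult eps f1 f2)) (mu pmf (Ugt eps f1 f2)).
- exists (Ugt eps f1 f2); split; first by left.
  by apply: gap_ge => //; [exact: Ugt_shift|lra].
- exists (Ult eps f1 f2); split; first by right.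
  have heavy : alpha <= 2 * mu pmf (Ult eps f1 f2) by lra.
  have [f [fg gap]] := gap_ge _ _ _ hf2 hf1 (Ult_shift eps f1 f2) heavy.
  by exists f; split=> //; case: fg; auto.
Qed.
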